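(* Let $\varepsilon^2=\xi^2+\eta^2$. (i) If $K>0$, then as $\varepsilon^2\to+\infty$ the eigenvalues of $A(\xi,\eta)$ satisfy $$\lambda_1=-K\varepsilon^2+o(\varepsilon^2),\quad \lambda_2=-\alpha\underline h\,\varepsilon^2+o(\varepsilon^2),\quad \lambda_3=-i\xi\tan\theta-\frac{s\bar\rho_s}{e\underline h}+o(1);$$ in particular the system is spectrally stable at all sufficiently high frequencies. (ii) If $K=0$ and $\xi\neq0$, then as $\varepsilon^2\to+\infty$, $$\lambda_1=\frac{s\underline c}{e\underline h}\Big(m-\frac{\xi^2}{\varepsilon^2}n\Big)+o(1),\quad \lambda_2=-\alpha\underline h\,\varepsilon^2+o(\varepsilon^2),\quad \lambda_3=-i\xi\tan\theta-\frac{s\bar\rho_s}{e\underline h}+o(1).$$ (iii) If $K=0$ and $\xi=0$, then as $\eta\to+\infty$, $$\lambda_1(0,\eta)=0,\quad \lambda_2(0,\eta)=-\alpha\underline h\,\eta^2+o(\eta^2),\quad \lambda_3(0,\eta)=\frac{s\underline c}{e\underline h}\Big(m-\frac{\bar\rho_s}{\underline c}\Big)+o(1).$$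
   Context: Parameters: $\theta\in(0,\pi/2)$, $\alpha>0$, $K\ge0$, $m,n>0$, $e,s>0$, $\bar\rho_s>0$, $\underline h>0$, $\underline c=\frac{e}{s}\underline h^m\tan^n\theta$, $a=\frac{s\bar\rho_s}{e\underline h}$. Symbol $A(\xi,\eta)=A_0+i\xi A_1-(\xi^2+\eta^2)A_2$ with $$A_0=\begin{pmatrix}0&0&0\\ \frac{am\underline c}{\underline h}&-a&0\\ -\frac{am\underline c}{\bar\rho_s}&\frac{a\underline h}{\bar\rho_s}&0\end{pmatrix},\ A_1=\begin{pmatrix}-\tan\theta&0&0\\ -\frac{\alpha an\underline c}{\tan\theta}&-\tan\theta&-\frac{\alpha an\underline c}{\tan\theta}\\ \frac{\alpha an\underline h\underline c}{\bar\rho_s\tan\theta}&0&\frac{\alpha an\underline h\underline c}{\bar\rho_s\tan\theta}\end{pmatrix},\ A_2=\begin{pmatrix}\alpha\underline h&0&\alpha\underline h\\0&0&0\\0&0&K\end{pmatrix}.$$ It is the Fourier symbol of the linearization about the constant state $(\underline h,\underline c,0)$ of the nondimensional erosion model; $\lambda_1,\lambda_2,\lambda_3$ denote its three eigenvalues. Spectrally stable at $(\xi,\eta)$ means all eigenvalues of $A(\xi,\eta)$ have strictly negative real part. *)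

From HB Require Import structures.
From mathcomp Require Import all_boot all_order all_algebra.
From mathcomp Require Import complex.
From mathcomp Require Import all_classical all_reals all_analysis.
Set Implicit Arguments. Unset Strict Implicit. Unset Printing Implicit Defensive.
Import Order.TTheory GRing.Theory Num.Theory ComplexField.
Local Open Scope ring_scope.
Local Open Scope complex_scope.

Definition mx3 {T : nmodType} (a11 a12 a13 a21 a22 a23 a31 a32 a33 : T) : 'M[T]_3 :=
  \matrix_(i < 3, j < 3)
    nth 0 (nth [::] [:: [:: a11; a12; a13]; [:: a21; a22; a23]; [:: a31; a32; a33]] i) j.

Definition cbar (R : realType) (theta m n e s h : R) : R :=
  e / s * (h `^ m) * ((tan theta) `^ n).

Definition acoef (R : realType) (e s rho h : R) : R := s * rho / (e * h).

Definition A0 (R : realType) (theta m n e s rho h : R) : 'M[R[i]]_3 :=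
  let c := cbar theta m n e s h in
  let a := acoef e s rho h in
  mx3 0 0 0
      (a * m * c / h)%:C (- a)%:C 0
      (- (a * m * c / rho))%:C (a * h / rho)%:C 0.

Definition A1 (R : realType) (theta alpha m n e s rho h : R) : 'M[R[i]]_3 :=
  let c := cbar theta m n e s h in
  let a := acoef e s rho h in
  let t := tan theta in
  mx3 (- t)%:C 0 0
      (- (alpha * a * n * c / t))%:C (- t)%:C (- (alpha * a * n * c / t))%:C
      (alpha * a * n * h * c / (rho * t))%:C 0 (alpha * a * n * h * c / (rho * t))%:C.

Definition A2 (R : realType) (alpha K h : R) : 'M[R[i]]_3 :=
  mx3 (alpha * h)%:C 0 (alpha * h)%:C
      0 0 0
      0 0 K%:C.

Definition Asym (R : realType) (theta alpha K m n e s rho h : R) (xi eta : R)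
  : 'M[R[i]]_3 :=
  A0 theta m n e s rho h + ('i * xi%:C) *: A1 theta alpha m n e s rho h
  - ((xi ^+ 2 + eta ^+ 2)%:C) *: A2 alpha K h.

Definition eigs3 (R : realType) (M : 'M[R[i]]_3) (l1 l2 l3 : R[i]) : Prop :=
  char_poly M = ('X - l1%:P) * ('X - l2%:P) * ('X - l3%:P).

Definition spectrally_stable (R : realType) (M : 'M[R[i]]_3) : Prop :=
  forall l : R[i], eigenvalue M l -> Re l < 0.

From HB Require Import structures.
From mathcomp Require Import all_boot all_order all_algebra.
From mathcomp Require Import complex.
From mathcomp Require Import all_classical all_reals all_analysis.
From mathcomp Require Import ring lra.
Import Order.TTheory GRing.Theory Num.Theory ComplexField Normc.
Set Implicit Arguments. Unset Strict Implicit. Unset Printing Implicit Defensive.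
Local Open Scope ring_scope.
Local Open Scope complex_scope.


(* The characteristic polynomial of A(xi, eta) is an explicit monic cubic. Its roots are located
   by a Newton-type bound: since p'/p = \sum_j 1 / (z - lambda_j), some root lies within
   3 |p(z)| / |p'(z)| of any point z. At z = - i xi tan(theta) - a the value p(z) is O(eps^2)
   while |p'(z)| grows at least like eps^3 (like K alpha h eps^4 when K > 0), which yields lambda_3;
   when K = 0 along a ray xi / eta = const the limit of lambda_1 is found in the same way, and it
   is not lambda_3 because the two approximate roots drift apart. The other eigenvalues come from
   Vieta's formulas: for K > 0 the product (lambda_1 + K eps^2) (lambda_2 + K eps^2) is O(eps^3),
   so its smaller factor is o(eps^2), and lambda_2 is read off the trace. On xi = 0 the cubic is
   lambda times a quadratic. *)

(** * Cubics and their roots *)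

Lemma det_mx3 (R : comNzRingType) (a11 a12 a13 a21 a22 a23 a31 a32 a33 : R) :
  \det (mx3 a11 a12 a13 a21 a22 a23 a31 a32 a33) =
  a11 * (a22 * a33 - a23 * a32) - a12 * (a21 * a33 - a23 * a31)
  + a13 * (a21 * a32 - a22 * a31).
Proof.
rewrite (expand_det_row _ 0) !big_ord_recl big_ord0 /cofactor.
rewrite !(expand_det_row _ 0) !big_ord_recl !big_ord0 /cofactor !det_mx11 !mxE /=.
rewrite !exprS !expr0; ring.
Qed.

Lemma char_poly_mx3 (R : comNzRingType) (a11 a12 a13 a21 a22 a23 a31 a32 a33 : R) :
  char_poly (mx3 a11 a12 a13 a21 a22 a23 a31 a32 a33) =
  'X^3 + (- (a11 + a22 + a33))%:P * 'X^2
  + (a11 * a22 + a11 * a33 - a13 * a31 + a22 * a33 - a23 * a32 - a12 * a21)%:P * 'X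
  + (- \det (mx3 a11 a12 a13 a21 a22 a23 a31 a32 a33))%:P.
Proof.
rewrite det_mx3 /char_poly (_ : char_poly_mx _ = mx3 ('X - a11%:P) (- a12%:P) (- a13%:P)
   (- a21%:P) ('X - a22%:P) (- a23%:P) (- a31%:P) (- a32%:P) ('X - a33%:P)).
  by rewrite det_mx3 !(rmorphN, rmorphD, rmorphB, rmorphM); ring.
apply/matrixP => i j; rewrite !mxE.
by case: i => [[|[|[|i]]] Hi] //; case: j => [[|[|[|j]]] Hj] //=;
  rewrite ?mulr1n ?mulr0n ?sub0r.
Qed.

Lemma monic_cubic_inj (F : comNzRingType) (a2 a1 a0 b2 b1 b0 : F) :
  'X^3 + a2%:P * 'X^2 + a1%:P * 'X + a0%:P = 'X^3 + b2%:P * 'X^2 + b1%:P * 'X + b0%:P ->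
  [/\ a2 = b2, a1 = b1 & a0 = b0].
Proof.
move=> E; have coef k := congr1 (fun p : {poly F} => p`_k) E.
move: (coef 2%N) (coef 1%N) (coef 0%N).
by rewrite !(coefD, coefCM, coefXn, coefX, coefC) /= !(mulr1, mulr0, add0r, addr0).
Qed.

Section Eigenvalues3.
Variable R : realType.
Implicit Types M : 'M[R[i]]_3.

Lemma eigs3_exists M : exists l1 l2 l3, eigs3 M l1 l2 l3.
Proof.
have [r Hr] := closed_field_poly_normal (char_poly M).
rewrite (monicP (char_poly_monic M)) scale1r in Hr.
have := size_char_poly M; rewrite Hr size_prod_XsubC.
case: r Hr => [|l1 [|l2 [|l3 [|]]]] // Hr _.
by exists l1, l2, l3; rewrite /eigs3 Hr !big_cons big_nil mulr1 mulrA.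
Qed.

Lemma eigs3_vieta M c2 c1 c0 l1 l2 l3 :
  char_poly M = 'X^3 + c2%:P * 'X^2 + c1%:P * 'X + c0%:P -> eigs3 M l1 l2 l3 ->
  [/\ l1 + l2 + l3 = - c2, l1 * l2 + l1 * l3 + l2 * l3 = c1 & l1 * l2 * l3 = - c0].
Proof.
rewrite /eigs3 => -> E.
have [-> -> ->] : [/\ c2 = - (l1 + l2 + l3), c1 = l1 * l2 + l1 * l3 + l2 * l3
                    & c0 = - (l1 * l2 * l3)].
  apply: monic_cubic_inj; rewrite E !(rmorphN, rmorphD, rmorphM); ring.
by rewrite !opprK.
Qed.

Lemma eigs3_eigenvalue M l1 l2 l3 l :
  eigs3 M l1 l2 l3 -> eigenvalue M l -> [\/ l = l1, l = l2 | l = l3].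
Proof.
rewrite /eigs3 eigenvalue_root_char => ->.
by rewrite !rootM !root_XsubC -orbA => /or3P[] /eqP ->; [apply: Or31|apply: Or32|apply: Or33].
Qed.

Lemma eigs3_choose (I : Type) (M : I -> 'M[R[i]]_3) (Q3 Q1 : I -> R[i] -> Prop) :
  (forall i l1 l2 l3, eigs3 (M i) l1 l2 l3 -> [\/ Q3 i l1, Q3 i l2 | Q3 i l3]) ->
  (forall i l1 l2 l3, eigs3 (M i) l1 l2 l3 -> [\/ Q1 i l1, Q1 i l2 | Q1 i l3]) ->
  exists l1 l2 l3 : I -> R[i], forall i,
    [/\ eigs3 (M i) (l1 i) (l2 i) (l3 i), Q3 i (l3 i) & Q1 i (l1 i) \/ Q1 i (l3 i)].
Proof.
move=> H3 H1.
suff /choice[f Hf] : forall i, exists l : R[i] * R[i] * R[i],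
    [/\ eigs3 (M i) l.1.1 l.1.2 l.2, Q3 i l.2 & Q1 i l.1.1 \/ Q1 i l.2].
  by exists (fun i => (f i).1.1), (fun i => (f i).1.2), (fun i => (f i).2).
move=> i; have [k1 [k2 [k3 Hk]]] := eigs3_exists (M i).
have P3 (a b c : R[i]) :
    ('X - k1%:P) * ('X - k2%:P) * ('X - k3%:P) = ('X - a%:P) * ('X - b%:P) * ('X - c%:P) ->
    Q3 i c ->
    Q1 i a \/ Q1 i c -> exists l, [/\ eigs3 (M i) l.1.1 l.1.2 l.2, Q3 i l.2
                                    & Q1 i l.1.1 \/ Q1 i l.2].
  by move=> E q3 q1; exists (a, b, c); split; rewrite // /eigs3 Hk.
by case: (H3 _ _ _ _ Hk) => q3; case: (H1 _ _ _ _ Hk) => q1;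
  [ apply: (P3 k2 k3 k1) | apply: (P3 k2 k3 k1) | apply: (P3 k3 k2 k1)
  | apply: (P3 k1 k3 k2) | apply: (P3 k1 k3 k2) | apply: (P3 k3 k1 k2)
  | apply: (P3 k1 k2 k3) | apply: (P3 k2 k1 k3) | apply: (P3 k1 k2 k3) ]; by [ring|tauto].
Qed.

End Eigenvalues3.

Definition cubic (F : comNzRingType) (c2 c1 c0 z : F) := z ^+ 3 + c2 * z ^+ 2 + c1 * z + c0.
Definition dcubic (F : comNzRingType) (c2 c1 z : F) := 3%:R * z ^+ 2 + 2%:R * c2 * z + c1.

Section NormcFacts.
Variable R : rcfType.
Implicit Types (z w : R[i]) (r : R).

Lemma normcE z : `|z| = (normc z)%:C.
Proof. by case: z. Qed.

Lemma normc_ge0 z : 0 <= normc z.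
Proof. by case: z => ? ?; exact: sqrtr_ge0. Qed.

Lemma normc_le z r : (`|z| <= r%:C) = (normc z <= r).
Proof. by rewrite normcE lecR. Qed.

Lemma normcB z w : normc (z - w) <= normc z + normc w.
Proof. by rewrite -(normcN w); exact: le_normcD. Qed.

Lemma normc_ge_normcB z w : normc z - normc w <= normc (z + w).
Proof. by rewrite lerBlDr; have := normcB (z + w) w; rewrite addrK. Qed.

Lemma normcBC z w : normc (z - w) = normc (w - z).
Proof. by rewrite -normcN opprB. Qed.

Lemma normc_real r : normc r%:C = `|r|.
Proof. by rewrite /normc /= expr0n addr0 sqrtr_sqr. Qed.

Lemma normc_i : normc 'i = 1 :> R.
Proof. by rewrite /normc /= expr0n expr1n add0r sqrtr1. Qed.

Lemma normc_natM z k : normc (k%:R * z) = k%:R * normc z.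
Proof. by rewrite !mulr_natl normcMn. Qed.

Lemma neq0_i : 'i != 0 :> R[i].
Proof. by apply: contra_neq (@oner_neq0 R) => i0; rewrite -normc_i i0 normc0. Qed.

Lemma normc_gt0 z : z != 0 -> 0 < normc z.
Proof. by move=> z0; rewrite lt_def normc_ge0 andbT; apply: contra z0 => /eqP /eq0_normc ->. Qed.

Lemma normcX z k : normc (z ^+ k) = normc z ^+ k.
Proof. by elim: k => [|k IH]; rewrite ?normc1 // !exprS normcM IH. Qed.

Lemma Re_le_normcB z w : complex.Re z <= complex.Re w + normc (z - w).
Proof.
case: z w => [a b] [c d]; rewrite /normc /= -lerBlDl.
apply: le_trans (ler_norm _) _; rewrite -sqrtr_sqr ler_sqrt ?addr_ge0 ?sqr_ge0 //.
by rewrite lerDl sqr_ge0.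
Qed.

Lemma normc_min3 w1 w2 w3 :
  let N := normc (w1 * w2 + w1 * w3 + w2 * w3) in
  let N3 := normc (w1 * w2 * w3) in
  [\/ normc w1 * N <= 3%:R * N3, normc w2 * N <= 3%:R * N3 | normc w3 * N <= 3%:R * N3].
Proof.
move=> N N3.
have leN : N <= normc w1 * normc w2 + normc w1 * normc w3 + normc w2 * normc w3.
  rewrite /N -!normcM; apply: le_trans (le_normcD _ _) _.
  by rewrite lerD2r; exact: le_normcD.
have minP (u v x : R) : 0 <= u -> u <= v -> u <= x ->
    N <= u * v + u * x + v * x -> u * N <= 3%:R * (u * v * x).
  move=> u0 uv ux uN; apply: le_trans (ler_wpM2l u0 uN) _.
  have h1 : 0 <= u * v * (x - u) by rewrite !mulr_ge0 ?subr_ge0 //; lra.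
  have h2 : 0 <= u * x * (v - u) by rewrite !mulr_ge0 ?subr_ge0 //; lra.
  lra.
rewrite /N3 !normcM.
have n1 := normc_ge0 w1; have n2 := normc_ge0 w2; have n3 := normc_ge0 w3.
have [l12|l21] := lerP (normc w1) (normc w2); have [l13|l31] := lerP (normc w1) (normc w3);
  have [l23|l32] := lerP (normc w2) (normc w3).
- by apply: Or31; apply: minP; lra.
- by apply: Or31; apply: minP; lra.
- lra.
- by apply: Or33; have := minP (normc w3) (normc w1) (normc w2); lra.
- by apply: Or32; have := minP (normc w2) (normc w1) (normc w3); lra.
- lra.
- by apply: Or32; have := minP (normc w2) (normc w1) (normc w3); lra.
- by apply: Or33; have := minP (normc w3) (normc w1) (normc w2); lra.
Qed.

Lemma normc_min2 w1 w2 :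
  normc w1 * normc (w1 + w2) <= 2%:R * normc (w1 * w2) \/
  normc w2 * normc (w1 + w2) <= 2%:R * normc (w1 * w2).
Proof.
have := le_normcD w1 w2; have n1 := normc_ge0 w1; have n2 := normc_ge0 w2.
have := normc_ge0 (w1 + w2); rewrite normcM.
by have [l12|l21] := lerP (normc w1) (normc w2); [left|right]; nra.
Qed.

Lemma cubic_root_near c2 c1 c0 l1 l2 l3 z :
  l1 + l2 + l3 = - c2 -> l1 * l2 + l1 * l3 + l2 * l3 = c1 -> l1 * l2 * l3 = - c0 ->
  let N := normc (dcubic c2 c1 z) in let N3 := 3%:R * normc (cubic c2 c1 c0 z) in
  [\/ normc (z - l1) * N <= N3, normc (z - l2) * N <= N3 | normc (z - l3) * N <= N3].
Proof.
move=> S1 S2 S3; rewrite /dcubic /cubic -S2.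
have -> : c2 = - (l1 + l2 + l3) by rewrite S1 opprK.
have -> : c0 = - (l1 * l2 * l3) by rewrite S3 opprK.
have -> : 3%:R * z ^+ 2 + 2%:R * - (l1 + l2 + l3) * z + (l1 * l2 + l1 * l3 + l2 * l3) =
  (z - l1) * (z - l2) + (z - l1) * (z - l3) + (z - l2) * (z - l3) by ring.
have -> : z ^+ 3 + - (l1 + l2 + l3) * z ^+ 2 + (l1 * l2 + l1 * l3 + l2 * l3) * z
  + - (l1 * l2 * l3) = (z - l1) * (z - l2) * (z - l3) by ring.
exact: normc_min3.
Qed.

End NormcFacts.

Lemma eigs3_newton (R : realType) (M : 'M[R[i]]_3) c2 c1 c0 l1 l2 l3 z :
  char_poly M = 'X^3 + c2%:P * 'X^2 + c1%:P * 'X + c0%:P -> eigs3 M l1 l2 l3 ->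
  let N := normc (dcubic c2 c1 z) in let N3 := 3%:R * normc (cubic c2 c1 c0 z) in
  [\/ normc (z - l1) * N <= N3, normc (z - l2) * N <= N3 | normc (z - l3) * N <= N3].
Proof. by move=> Hc /(eigs3_vieta Hc) [S1 S2 S3]; exact: cubic_root_near. Qed.

(** * Asymptotic comparison along a gauge *)

Section Gauge.
Variables (R : rcfType) (I : Type) (rho : I -> R).
Implicit Types (P Q : I -> Prop) (f g : I -> R[i]).

Definition ultimately P := exists r0 : R, 1 <= r0 /\ forall i, r0 <= rho i -> P i.

Definition dominated k f :=
  exists C : R, 0 <= C /\ ultimately (fun i => normc (f i) <= C * rho i ^+ k).
Definition negligible k f :=
  forall d : R, 0 < d -> ultimately (fun i => normc (f i) <= d * rho i ^+ k).

Lemma ultimatelyW P Q : (forall i, P i -> Q i) -> ultimately P -> ultimately Q.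
Proof. by move=> PQ [r0 [r01 H]]; exists r0; split => // i /H /PQ. Qed.

Lemma ultimatelyI P Q : ultimately P -> ultimately Q -> ultimately (fun i => P i /\ Q i).
Proof.
move=> [r1 [r11 H1]] [r2 [r21 H2]]; exists (Num.max r1 r2); split; first by rewrite le_max r11.
by move=> i; rewrite ge_max => /andP[/H1 ? /H2 ?].
Qed.

Lemma ultimately_ge r : ultimately (fun i => r <= rho i).
Proof.
exists (Num.max 1 r); split; first by rewrite le_max lexx.
by move=> i; rewrite ge_max => /andP[].
Qed.

Lemma eq_dominated k f g : f =1 g -> dominated k f -> dominated k g.
Proof. by move=> fg [C [C0 H]]; exists C; split => //; apply: ultimatelyW H => i; rewrite fg. Qed.

Lemma dominated_cst (z : R[i]) : dominated 0 (fun=> z).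
Proof.
exists (normc z); split; first exact: normc_ge0.
by apply: ultimatelyW (ultimately_ge 1) => i _; rewrite expr0 mulr1.
Qed.

Lemma dominatedW k l f : (k <= l)%N -> dominated k f -> dominated l f.
Proof.
move=> kl [C [C0 H]]; exists C; split => //.
apply: ultimatelyW (ultimatelyI H (ultimately_ge 1)) => i [fC r1]; apply: le_trans fC _.
by rewrite ler_wpM2l // ler_weXn2l.
Qed.

Lemma dominated_cstW k (z : R[i]) : dominated k (fun=> z).
Proof. exact: dominatedW (dominated_cst z). Qed.

Lemma dominatedD k f g : dominated k f -> dominated k g -> dominated k (fun i => f i + g i).
Proof.
move=> [C1 [C10 H1]] [C2 [C20 H2]]; exists (C1 + C2); split; first by rewrite addr_ge0.
by apply: ultimatelyW (ultimatelyI H1 H2) => i [? ?]; apply: le_trans (le_normcD _ _) _; lra.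
Qed.

Lemma dominatedN k f : dominated k f -> dominated k (fun i => - f i).
Proof. by move=> [C [C0 H]]; exists C; split => //; apply: ultimatelyW H => i; rewrite normcN. Qed.

Lemma dominatedB k f g : dominated k f -> dominated k g -> dominated k (fun i => f i - g i).
Proof. by move=> Hf /dominatedN; apply: dominatedD. Qed.

Lemma dominatedM k l f g :
  dominated k f -> dominated l g -> dominated (k + l) (fun i => f i * g i).
Proof.
move=> [C1 [C10 H1]] [C2 [C20 H2]]; exists (C1 * C2); split; first by rewrite mulr_ge0.
apply: ultimatelyW (ultimatelyI (ultimatelyI H1 H2) (ultimately_ge 1)) => i [[f1 g2] r1].
rewrite normcM exprD mulrACA; exact: ler_pM (normc_ge0 _) (normc_ge0 _) f1 g2.
Qed.

Lemma dominatedX k j f : dominated k f -> dominated (k * j) (fun i => f i ^+ j).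
Proof.
move=> H; elim: j => [|j IH]; first by rewrite muln0; apply: eq_dominated (dominated_cst 1) => i.
by rewrite mulnS; apply: eq_dominated (dominatedM H IH) => i; rewrite exprS.
Qed.

Lemma negligible_dominated k f : negligible k f -> dominated k f.
Proof. by move=> H; exists 1; split => //; exact: H. Qed.

Lemma dominated_negligible k f : dominated k f -> negligible k.+1 f.
Proof.
move=> [C [C0 H]] d d0.
apply: ultimatelyW (ultimatelyI H (ultimately_ge (C / d))) => i [fC Cr]; apply: le_trans fC _.
have Cd : C <= d * rho i by rewrite mulrC -ler_pdivrMr.
have rk : 0 <= rho i ^+ k.
  by rewrite exprn_ge0 //; apply: le_trans Cr; rewrite divr_ge0 // ltW.
by rewrite exprSr mulrCA [C * _]mulrC ler_wpM2l.
Qed.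

Lemma eq_negligible k f g : f =1 g -> negligible k f -> negligible k g.
Proof. by move=> fg H d /H; apply: ultimatelyW => i; rewrite fg. Qed.

Lemma negligibleD k f g : negligible k f -> negligible k g -> negligible k (fun i => f i + g i).
Proof.
move=> H1 H2 d d0; have d2 : 0 < d / 2 by rewrite divr_gt0.
apply: ultimatelyW (ultimatelyI (H1 _ d2) (H2 _ d2)) => i [f1 g2].
by apply: le_trans (le_normcD _ _) _; rewrite [d]splitr mulrDl lerD.
Qed.

Lemma negligibleN k f : negligible k f -> negligible k (fun i => - f i).
Proof. by move=> H d /H; apply: ultimatelyW => i; rewrite normcN. Qed.

Lemma negligibleB k f g : negligible k f -> negligible k g -> negligible k (fun i => f i - g i).
Proof. by move=> Hf /negligibleN; apply: negligibleD. Qed.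

Lemma normc_ge_dominant l f g (c : R) : 0 < c ->
  ultimately (fun i => c * rho i ^+ l <= normc (f i)) -> negligible l g ->
  ultimately (fun i => c / 2 * rho i ^+ l <= normc (f i + g i)).
Proof.
move=> c0 Hf Hg; have c2 : 0 < c / 2 by rewrite divr_gt0.
apply: ultimatelyW (ultimatelyI Hf (Hg _ c2)) => i [fc gc].
have := normc_ge_normcB (f i) (g i); have := splitr c; nra.
Qed.

Lemma negligible_sqrt k f g :
  ultimately (fun i => normc (f i) ^+ 2 <= normc (g i)) -> negligible (k + k) g ->
  negligible k f.
Proof.
move=> H Hg d d0.
apply: ultimatelyW (ultimatelyI (ultimatelyI H (Hg _ (mulr_gt0 d0 d0))) (ultimately_ge 1))
  => i [[fg gd] r1].
have := le_trans fg gd; rewrite exprD mulrACA -!expr2 ler_pXn2r // ?nnegrE ?normc_ge0 //.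
by rewrite mulr_ge0 ?exprn_ge0 // ?ltW //; lra.
Qed.

Lemma negligible_div k w q f (c : R) : 0 < c ->
  ultimately (fun i => normc (w i) * normc (q i) <= normc (f i)) ->
  ultimately (fun i => c * rho i ^+ k.+1 <= normc (q i)) -> dominated k f -> negligible 0 w.
Proof.
move=> c0 Hw Hq [C [C0 Hf]] d d0.
have cd : 0 < c * d by rewrite mulr_gt0.
apply: ultimatelyW (ultimatelyI (ultimatelyI (ultimatelyI (ultimatelyI Hw Hq) Hf)
                     (ultimately_ge (C / (c * d)))) (ultimately_ge 1)) => i [[[[wq qc] fC] Cr] r1].
have r0 : 0 < rho i by lra.
have cr0 : 0 < c * rho i by rewrite mulr_gt0.
have wC : normc (w i) * (c * rho i) * rho i ^+ k <= C * rho i ^+ k.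
  apply: le_trans _ (le_trans wq fC); rewrite -mulrA ler_wpM2l ?normc_ge0 //.
  by apply: le_trans qc; rewrite exprSr [rho i ^+ k * _]mulrC mulrA.
rewrite ler_pM2r ?exprn_gt0 // in wC.
rewrite expr0 mulr1 -(ler_pM2r cr0); apply: le_trans wC _.
by rewrite (_ : d * (c * rho i) = rho i * (c * d)) -?ler_pdivrMr //; ring.
Qed.

End Gauge.

Arguments ultimately_ge {R I rho}.
Arguments dominated_cst {R I rho}.
Arguments dominated_cstW {R I rho}.

Lemma ultimately_gtP (R : rcfType) (P : R -> Prop) :
  ultimately id P -> exists M, forall x, M < x -> P x.
Proof. by move=> [r0 [_ H]]; exists r0 => x /ltW /H. Qed.

Lemma ultimately_norm2P (R : rcfType) (P : R -> R -> Prop) :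
  ultimately (fun q => Num.sqrt (q.1 ^+ 2 + q.2 ^+ 2)) (fun q => P q.1 q.2) ->
  exists M, forall xi eta, M < xi ^+ 2 + eta ^+ 2 -> P xi eta.
Proof.
move=> [r0 [r01 H]]; exists (r0 ^+ 2) => xi eta hM; apply: (H (xi, eta)) => /=.
have r00 : 0 <= r0 by apply: le_trans r01.
by rewrite -(ger0_norm r00) -sqrtr_sqr ler_sqrt ?addr_ge0 ?sqr_ge0 // ltW.
Qed.

Lemma dominated_id (R : rcfType) : dominated id 1 (fun t : R => t%:C).
Proof.
exists 1; split => //; apply: ultimatelyW (ultimately_ge 1) => t t1.
by rewrite normc_real mul1r expr1 ger0_norm //; apply: le_trans t1.
Qed.

Lemma dominated_linear (R : rcfType) (k1 k0 : R[i]) :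
  dominated id 1 (fun t : R => t%:C * k1 + k0).
Proof.
exact: dominatedD (dominatedM (@dominated_id R) (dominated_cst k1)) (dominated_cstW 1 k0).
Qed.

Lemma dominated_quadratic (R : rcfType) (k2 k1 k0 : R[i]) :
  dominated id 2 (fun t : R => t%:C ^+ 2 * k2 + t%:C * k1 + k0).
Proof.
have Ht := @dominated_id R.
have H2 : dominated id 2 (fun t : R => t%:C ^+ 2 * k2).
  exact: (dominatedM (dominatedX 2 Ht) (dominated_cst k2)).
have H1 : dominated id 2 (fun t : R => t%:C * k1).
  exact: (dominatedW (isT : (1 + 0 <= 2)%N) (dominatedM Ht (dominated_cst k1))).
exact: dominatedD (dominatedD H2 H1) (dominated_cstW 2 k0).
Qed.

Lemma normc_cubic_ge (R : rcfType) (w k2 k1 k0 : R[i]) :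
  ultimately id (fun t : R =>
    normc w / 2 * t ^+ 3 <= normc (t%:C ^+ 3 * w + (t%:C ^+ 2 * k2 + t%:C * k1 + k0))).
Proof.
have [w0|w0] := eqVneq w 0.
  apply: ultimatelyW (ultimately_ge 1) => t _.
  by rewrite w0 normc0 !mul0r normc_ge0.
have nw := normc_gt0 w0.
have Hw : ultimately id (fun t : R => normc w * id t ^+ 3 <= normc (t%:C ^+ 3 * w)).
  apply: ultimatelyW (ultimately_ge 1) => t t1.
  by rewrite normcM normcX normc_real ger0_norm 1?mulrC //; apply: le_trans t1.
exact: (normc_ge_dominant nw Hw (dominated_negligible (dominated_quadratic k2 k1 k0))).
Qed.

(** * The linearised erosion symbol *)

(* With [T = tan theta], [P = alpha h], [A = a], [U = a m c / rho], [B = alpha a n h c / (rho tan theta)],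
   [x = i xi] and [E = xi^2 + eta^2], the characteristic polynomial of [A(xi, eta)] is
   [X^3 + chi2 X^2 + chi1 X + chi0] (see [char_poly_Asym]). *)
Section SymbolCoefficients.
Variables (F : comNzRingType) (T P K A U B x E : F).

Definition chi2 := (P + K) * E + A + (2%:R * T - B) * x.
Definition chi1 := (T * x + P * E) * (A + T * x) + K * E * (P * E + A + 2%:R * T * x)
  - (2%:R * T * B * x ^+ 2 + P * U * E).
Definition chi0 := K * E * (T * x + P * E) * (A + T * x) - T * x * (T * B * x ^+ 2 + P * U * E).

Lemma cubic_transport : cubic chi2 chi1 chi0 (- (A + T * x)) = A * (P * U * E - A * B * x).
Proof. by rewrite /cubic /chi2 /chi1 /chi0; ring. Qed.

Lemma dcubic_transport : dcubic chi2 chi1 (- (A + T * x)) =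
  (A - P * E) * (A + T * x - K * E) + 2%:R * A * B * x - P * U * E.
Proof. by rewrite /dcubic /chi2 /chi1; ring. Qed.

End SymbolCoefficients.

Section RayCoefficients.
Variables (F : comNzRingType) (T P A U B y E0 : F).
Local Notation c2 t := (chi2 T P 0 A B (t * y) (t ^+ 2 * E0)).
Local Notation c1 t := (chi1 T P 0 A U B (t * y) (t ^+ 2 * E0)).
Local Notation c0 t := (chi0 T P 0 A U B (t * y) (t ^+ 2 * E0)).

Lemma cubic_ray z : exists k2 k1 k0 : F, forall t, cubic (c2 t) (c1 t) (c0 t) z =
  t ^+ 3 * (T * y * (P * E0 * z - (T * B * y ^+ 2 + P * U * E0))) + (t ^+ 2 * k2 + t * k1 + k0).
Proof.
exists (P * E0 * z ^+ 2 + (T ^+ 2 * y ^+ 2 + A * P * E0 - 2%:R * T * B * y ^+ 2 - P * U * E0) * z),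
  ((2%:R * T - B) * y * z ^+ 2 + A * T * y * z), (z ^+ 3 + A * z ^+ 2) => t.
by rewrite /cubic /chi2 /chi1 /chi0; ring.
Qed.

Lemma dcubic_ray z : exists k2 k1 k0 : F, forall t,
  dcubic (c2 t) (c1 t) z = t ^+ 3 * (P * T * y * E0) + (t ^+ 2 * k2 + t * k1 + k0).
Proof.
exists (2%:R * P * E0 * z + (T ^+ 2 * y ^+ 2 + A * P * E0 - 2%:R * T * B * y ^+ 2 - P * U * E0)),
  (2%:R * (2%:R * T - B) * y * z + A * T * y), (3%:R * z ^+ 2 + 2%:R * A * z) => t.
by rewrite /dcubic /chi2 /chi1; ring.
Qed.

Lemma dcubic_transport_ray : exists k2 k1 k0 : F, forall t,
  dcubic (c2 t) (c1 t) (- (A + T * (t * y))) = t ^+ 3 * - (P * T * y * E0) + (t ^+ 2 * k2 + t * k1 + k0).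
Proof.
exists (- (P * E0 * A) - P * U * E0), (A * T * y + 2%:R * A * B * y), (A ^+ 2) => t.
by rewrite dcubic_transport; ring.
Qed.

End RayCoefficients.

Lemma char_poly_symbol (F : fieldType) (T P K A U B U1 B1 V x E : F) :
  V != 0 -> U1 * V = A * U -> B1 * V = A * B ->
  char_poly (mx3 (- (T * x) - P * E) 0 (- (P * E)) (U1 - B1 * x) (- A - T * x) (- (B1 * x))
                 (B * x - U) V (B * x - K * E)) =
  'X^3 + (chi2 T P K A B x E)%:P * 'X^2 + (chi1 T P K A U B x E)%:P * 'X
  + (chi0 T P K A U B x E)%:P.
Proof.
move=> V0 hU1 hB1; rewrite -(mulfK V0 U1) -(mulfK V0 B1) hU1 hB1.
rewrite char_poly_mx3 det_mx3 /chi2 /chi1 /chi0.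
by congr (_ + _%:P * _ + _%:P * _ + _%:P); field.
Qed.

Section ErosionSymbol.
Variables (R : realType) (theta alpha K m n e s rho h : R).
Hypotheses (htheta : 0 < theta < pi / 2) (halpha : 0 < alpha)
  (he : 0 < e) (hs : 0 < s) (hrho : 0 < rho) (hh : 0 < h).

Local Notation c := (cbar theta m n e s h).
Local Notation a := (acoef e s rho h).
Local Notation symbol := (Asym theta alpha K m n e s rho h).

Let tan_gt0 : 0 < tan theta.
Proof.
case/andP: htheta => t0 tpi; rewrite /tan divr_gt0 //.
  by apply: sin_gt0_pihalf; rewrite t0 tpi.
by apply: cos_gt0_pihalf; rewrite tpi andbT; have := @pi_gt0 R; lra.
Qed.

Let c_gt0 : 0 < c.
Proof. by rewrite /cbar mulr_gt0 ?powR_gt0 // mulr_gt0 ?divr_gt0 ?powR_gt0. Qed.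

Let a_gt0 : 0 < a.
Proof. by rewrite /acoef divr_gt0 ?mulr_gt0. Qed.

Let realC_neq0 (r : R) : r != 0 -> r%:C != 0 :> R[i].
Proof. by move=> r0; apply: contraNneq r0 => -[->]. Qed.

Local Notation T := ((tan theta)%:C : R[i]).
Local Notation P := ((alpha * h)%:C : R[i]).
Local Notation A := (a%:C : R[i]).
Local Notation U := ((a * m * c / rho)%:C : R[i]).
Local Notation B := ((alpha * a * n * h * c / (rho * tan theta))%:C : R[i]).
Local Notation X xi := ('i * xi%:C : R[i]).
Local Notation E xi eta := ((xi ^+ 2 + eta ^+ 2)%:C : R[i]).
Local Notation C2 xi eta := (chi2 T P K%:C A B (X xi) (E xi eta)).
Local Notation C1 xi eta := (chi1 T P K%:C A U B (X xi) (E xi eta)).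
Local Notation C0 xi eta := (chi0 T P K%:C A U B (X xi) (E xi eta)).

Lemma char_poly_Asym xi eta :
  char_poly (symbol xi eta) = 'X^3 + (C2 xi eta)%:P * 'X^2 + (C1 xi eta)%:P * 'X + (C0 xi eta)%:P.
Proof.
pose U1 : R[i] := (a * m * c / h)%:C; pose B1 : R[i] := (alpha * a * n * c / tan theta)%:C.
pose V : R[i] := (a * h / rho)%:C.
have -> : symbol xi eta = mx3 (- (T * X xi) - P * E xi eta) 0 (- (P * E xi eta))
    (U1 - B1 * X xi) (- A - T * X xi) (- (B1 * X xi)) (B * X xi - U) V (B * X xi - K%:C * E xi eta).
  apply/matrixP => i j; rewrite /symbol /Asym /A0 /A1 /A2 !mxE.
  by case: i => [[|[|[|i]]] Hi] //; case: j => [[|[|[|j]]] Hj] //=;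
    rewrite /U1 /B1 /V ?rmorphN; ring.
apply: char_poly_symbol; rewrite /V /U1 /B1.
- exact: realC_neq0 (lt0r_neq0 (divr_gt0 (mulr_gt0 a_gt0 hh) hrho)).
- by rewrite -!rmorphM; congr _%:C; field; rewrite !gt_eqF.
- by rewrite -!rmorphM; congr _%:C; field; rewrite !gt_eqF.
Qed.

Let P_neq0 : P != 0 := realC_neq0 (lt0r_neq0 (mulr_gt0 halpha hh)).
Let T_neq0 : T != 0 := realC_neq0 (lt0r_neq0 tan_gt0).

Let normcC (r : R) : 0 <= r -> normc r%:C = r.
Proof. by move=> r0; rewrite normc_real ger0_norm. Qed.

Section NormalFrequency.
Hypothesis K0 : K = 0.

Local Notation zs := (U - A).

(* Along [xi = 0] one eigenvalue is [0] and the other two solve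
   [z^2 + (P E + A) z + P E (A - U) = 0], whose value at [zs] is the constant [U zs]. *)
Let eigs_normal eta : exists l : R[i] * R[i],
  [/\ eigs3 (symbol 0 eta) 0 l.1 l.2, l.1 = - (P * E 0 eta + A) - l.2
    & normc (zs - l.2) * normc (P * E 0 eta + (zs + zs + A)) <= 2%:R * normc (U * zs)].
Proof.
have Hc : char_poly (symbol 0 eta) =
    'X^3 + (P * E 0 eta + A)%:P * 'X^2 + (P * E 0 eta * (A - U))%:P * 'X + 0%:P.
  rewrite char_poly_Asym /chi2 /chi1 /chi0 K0 rmorph0.
  by congr (_ + _%:P * _ + _%:P * _ + _%:P); ring.
have [k1 [k2 [k3 Hk]]] := eigs3_exists (symbol 0 eta).
have [S1 S2 S3] := eigs3_vieta Hc Hk.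
have pick (u v : R[i]) : eigs3 (symbol 0 eta) 0 u v -> u + v = - (P * E 0 eta + A) ->
    u * v = P * E 0 eta * (A - U) -> exists l : R[i] * R[i],
  [/\ eigs3 (symbol 0 eta) 0 l.1 l.2, l.1 = - (P * E 0 eta + A) - l.2
    & normc (zs - l.2) * normc (P * E 0 eta + (zs + zs + A)) <= 2%:R * normc (U * zs)].
  move=> He Huv Puv.
  have Hs : (zs - u) + (zs - v) = P * E 0 eta + (zs + zs + A).
    have -> : (zs - u) + (zs - v) = zs + zs - (u + v) by ring.
    by rewrite Huv; ring.
  have Hp : (zs - u) * (zs - v) = U * zs.
    have -> : (zs - u) * (zs - v) = zs * zs - zs * (u + v) + u * v by ring.
    by rewrite Huv Puv; ring.
  case: (normc_min2 (zs - u) (zs - v)); rewrite Hs Hp => Hn.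
    exists (v, u); split => //=; last by rewrite -Huv; ring.
    by move: He; rewrite /eigs3 => ->; ring.
  by exists (u, v); split => //=; rewrite -Huv; ring.
move/eqP: S3; rewrite oppr0 !mulf_eq0 -orbA => /or3P[] /eqP k0; rewrite k0 in Hk S1 S2.
- by apply: (pick k2 k3 Hk); [rewrite -S1 | rewrite -S2]; ring.
- by apply: (pick k1 k3); [move: Hk; rewrite /eigs3 => -> | rewrite -S1 | rewrite -S2]; ring.
- by apply: (pick k1 k2); [move: Hk; rewrite /eigs3 => -> | rewrite -S1 | rewrite -S2]; ring.
Qed.

Lemma eigs_normal_asymptotics : exists l1 l2 l3 : R -> R[i],
  (forall eta, eigs3 (symbol 0 eta) (l1 eta) (l2 eta) (l3 eta)) /\ (forall eta, l1 eta = 0) /\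
  (forall d : R, 0 < d -> exists M : R, forall eta : R, M < eta ->
     `| l2 eta - (- alpha * h * eta ^+ 2)%:C | <= (d * eta ^+ 2)%:C /\
     `| l3 eta - (s * c / (e * h) * (m - rho / c))%:C | <= d%:C).
Proof.
have /choice [f Hf] := eigs_normal.
exists (fun=> 0), (fun eta => (f eta).1), (fun eta => (f eta).2).
split; first by move=> eta; case: (Hf eta).
split=> //.
have hP : 0 < alpha * h by rewrite mulr_gt0.
have Lq : ultimately id (fun eta => alpha * h / 2 * eta ^+ 2 <=
                                   normc (P * E 0 eta + (zs + zs + A))).
  apply: (normc_ge_dominant hP _ (dominated_negligible (dominated_cstW _ _))).
  apply: ultimatelyW (ultimately_ge 1) => eta _.
  rewrite normcM (normcC (ltW hP)) normcC ?addr_ge0 ?sqr_ge0 //.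
  by rewrite /id expr0n add0r.
have W3 : negligible id 0 (fun eta => zs - (f eta).2).
  apply: (negligible_div (k := 1) _ _ Lq (dominated_cstW 1 (2%:R * (U * zs)))).
    by rewrite divr_gt0.
  apply: ultimatelyW (ultimately_ge 1) => eta _; case: (Hf eta) => _ _.
  by rewrite normc_natM.
have W2 : negligible id 2 (fun eta => zs - (f eta).2 - U).
  apply/dominated_negligible/(dominatedW (k := 0)) => //.
  exact/dominatedB/dominated_cst/negligible_dominated.
move=> d d0; apply: ultimately_gtP.
apply: ultimatelyW (ultimatelyI (W2 _ d0) (W3 _ d0)) => eta [H2 H3]; rewrite !normc_le.
split.
  case: (Hf eta) => _ -> _; move: H2; congr (normc _ <= _).
  by rewrite !rmorphM !rmorphN expr0n add0r; ring.
rewrite normcBC expr0 mulr1 in H3; move: H3; congr (normc (_ - _) <= _).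
rewrite -!rmorphB; congr _%:C; rewrite /acoef; field.
by rewrite !gt_eqF // mulr_gt0.
Qed.

End NormalFrequency.

Section ObliqueFrequency.
Hypothesis K0 : K = 0.
Variables xi0 eta0 : R.
Hypothesis xi0_neq0 : xi0 != 0.

Local Notation y := (X xi0).
Local Notation E0 := (E xi0 eta0).
Local Notation c2 t := (chi2 T P 0 A B (t%:C * y) (t%:C ^+ 2 * E0)).
Local Notation c1 t := (chi1 T P 0 A U B (t%:C * y) (t%:C ^+ 2 * E0)).
Local Notation c0 t := (chi0 T P 0 A U B (t%:C * y) (t%:C ^+ 2 * E0)).
Local Notation z0 t := (- (A + T * (t%:C * y))).
(* [L] cancels the [t^3] coefficient of [p(L)] in [cubic_ray]. *)
Local Notation L := ((T * B * y ^+ 2 + P * U * E0) / (P * E0)).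

Let newton (t : R) (z l : R[i]) : bool :=
  normc (z - l) * normc (dcubic (c2 t) (c1 t) z) <= 3%:R * normc (cubic (c2 t) (c1 t) (c0 t) z).

Let char_poly_ray t : char_poly (symbol (t * xi0) (t * eta0)) =
  'X^3 + (c2 t)%:P * 'X^2 + (c1 t)%:P * 'X + (c0 t)%:P.
Proof.
rewrite char_poly_Asym K0 rmorph0 (_ : X (t * xi0) = t%:C * y); last by rewrite rmorphM; ring.
by rewrite (_ : E _ _ = t%:C ^+ 2 * E0) // -rmorphXn -rmorphM; congr _%:C; ring.
Qed.

Let eigs_oblique : exists l1 l2 l3 : R -> R[i], forall t,
  [/\ eigs3 (symbol (t * xi0) (t * eta0)) (l1 t) (l2 t) (l3 t), newton t (z0 t) (l3 t)
    & newton t L (l1 t) \/ newton t L (l3 t)].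
Proof.
apply: (eigs3_choose (M := fun t => symbol (t * xi0) (t * eta0))
  (Q3 := fun t => newton t (z0 t)) (Q1 := fun t => newton t L)) => t l1 l2 l3 He.
- exact: (eigs3_newton (z0 t) (char_poly_ray t) He).
- exact: (eigs3_newton L (char_poly_ray t) He).
Qed.

Let E0r_gt0 : 0 < xi0 ^+ 2 + eta0 ^+ 2.
Proof. by rewrite ltr_pwDl ?sqr_ge0 // exprn_even_gt0. Qed.

Let y_neq0 : y != 0 := mulf_neq0 (@neq0_i R) (realC_neq0 xi0_neq0).
Let E0_neq0 : E0 != 0 := realC_neq0 (lt0r_neq0 E0r_gt0).
Let PTyE0_neq0 : P * T * y * E0 != 0 :=
  mulf_neq0 (mulf_neq0 (mulf_neq0 P_neq0 T_neq0) y_neq0) E0_neq0.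

Let negligible_newton (z l : R -> R[i]) (w k2 k1 k0 : R[i]) :
  w != 0 -> (forall t, newton t (z t) (l t)) ->
  (forall t, dcubic (c2 t) (c1 t) (z t) = t%:C ^+ 3 * w + (t%:C ^+ 2 * k2 + t%:C * k1 + k0)) ->
  dominated id 2 (fun t => cubic (c2 t) (c1 t) (c0 t) (z t)) ->
  negligible id 0 (fun t => z t - l t).
Proof.
move=> w0 Hn Hd Hc.
have nw : 0 < normc w / 2 by rewrite divr_gt0 ?normc_gt0.
apply: (negligible_div nw _ _ (dominatedM (dominated_cst 3%:R) Hc)).
  by apply: ultimatelyW (ultimately_ge 1) => t _; rewrite normc_natM; exact: Hn.
by apply: ultimatelyW (normc_cubic_ge w k2 k1 k0) => t; rewrite Hd.
Qed.

Section ObliqueEigenvalues.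
Variables l1 l2 l3 : R -> R[i].
Hypothesis Hl : forall t,
  [/\ eigs3 (symbol (t * xi0) (t * eta0)) (l1 t) (l2 t) (l3 t), newton t (z0 t) (l3 t)
    & newton t L (l1 t) \/ newton t L (l3 t)].

Lemma transport_eig_oblique : negligible id 0 (fun t => z0 t - l3 t).
Proof.
have [k2 [k1 [k0 Hd]]] := dcubic_transport_ray T P A U B y E0.
apply: (negligible_newton (w := - (P * T * y * E0)) _ _ (fun t => Hd t%:C)).
- by rewrite oppr_eq0.
- by move=> t; case: (Hl t).
apply: eq_dominated (dominated_quadratic (A * P * U * E0) (- (A * A * B * y)) 0) => t.
by rewrite cubic_transport; ring.
Qed.

Let transport_separated : ultimately id (fun t => 2 <= normc (z0 t - L)).
Proof.
have Ty0 := normc_gt0 (mulf_neq0 T_neq0 y_neq0).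
have Hd : ultimately id (fun t => normc (T * y) * id t ^+ 1 <= normc (- (T * y) * t%:C)).
  apply: ultimatelyW (ultimately_ge 1) => t t1.
  by rewrite [Y in _ <= Y]normcM normcN normc_real ger0_norm ?expr1 //; apply: le_trans t1.
have := normc_ge_dominant Ty0 Hd (dominated_negligible (dominated_cstW 0 (- A - L))).
move=> H; apply: ultimatelyW (ultimatelyI H (ultimately_ge (4 / normc (T * y)))) => t [Ht t4].
have -> : z0 t - L = - (T * y) * t%:C + (- A - L) by ring.
apply: le_trans Ht; rewrite expr1 /id.
have : 4 <= t * normc (T * y) by rewrite -ler_pdivrMr.
lra.
Qed.

(* The root found near [L] cannot be [l3], which stays close to [z0], far from [L]. *)
Lemma slow_eig_oblique : negligible id 0 (fun t => L - l1 t).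
Proof.
have HL : P * E0 * L = T * B * y ^+ 2 + P * U * E0 by rewrite mulrC divfK ?mulf_neq0.
have [k2 [k1 [k0 Hp]]] := cubic_ray T P A U B y E0 L.
have [j2 [j1 [j0 Hdp]]] := dcubic_ray T P A U B y E0 L.
pose lL t := if newton t L (l1 t) then l1 t else l3 t.
have WL : negligible id 0 (fun t => L - lL t).
  apply: (negligible_newton (z := fun=> L) PTyE0_neq0 _ (fun t => Hdp t%:C)).
    by move=> t; rewrite /lL; case: ifP => // /negbT nt; case: (Hl t) => _ _ [] // /(negP nt).
  apply: eq_dominated (dominated_quadratic k2 k1 k0) => t.
  by rewrite Hp HL subrr !mulr0 add0r.
move=> d d0; have h2 : 0 < 1 / 2 :> R by [].
apply: ultimatelyW (ultimatelyI (ultimatelyI (ultimatelyI (WL _ d0) (WL _ h2))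
  (transport_eig_oblique h2)) transport_separated) => t [[[WLd WLh] W3] sep].
move: WLd WLh; rewrite /lL; case: ifP => // _ _ WLh; exfalso.
have := normcB (z0 t - l3 t) (L - l3 t); rewrite expr0 mulr1 in WLh W3.
rewrite (_ : z0 t - l3 t - (L - l3 t) = z0 t - L); last by ring.
lra.
Qed.

Lemma viscous_eig_oblique : negligible id 2 (fun t => l2 t + P * (t%:C ^+ 2 * E0)).
Proof.
apply: dominated_negligible.
have dom0 (f : R -> R[i]) : negligible id 0 f -> dominated id 1 f.
  by move=> /negligible_dominated; exact: dominatedW.
have := dominatedB (dominatedD (dominatedD
    (dominated_linear (- ((2%:R * T - B) * y)) (- A - L)) (dom0 _ slow_eig_oblique))
    (dom0 _ transport_eig_oblique)) (dominated_linear (- (T * y)) (- A)).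
apply: eq_dominated => t /=.
case: (Hl t) => /(eigs3_vieta (char_poly_ray t)) [S1 _ _] _ _.
rewrite (_ : l2 t = - c2 t - l1 t - l3 t); last by rewrite -S1; ring.
by rewrite /chi2; ring.
Qed.

End ObliqueEigenvalues.

Lemma eigs_oblique_asymptotics : exists l1 l2 l3 : R -> R[i],
  (forall t, eigs3 (symbol (t * xi0) (t * eta0)) (l1 t) (l2 t) (l3 t)) /\
  (forall d : R, 0 < d -> exists M : R, forall t : R, M < t ->
     let xi := t * xi0 in
     let eps2 := xi ^+ 2 + (t * eta0) ^+ 2 in
     `| l1 t - (s * c / (e * h) * (m - xi ^+ 2 / eps2 * n))%:C | <= d%:C /\
     `| l2 t - (- alpha * h * eps2)%:C | <= (d * eps2)%:C /\
     `| l3 t - (- ('i * (xi * tan theta)%:C) - a%:C) | <= d%:C).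
Proof.
have [l1 [l2 [l3 Hl]]] := eigs_oblique; exists l1, l2, l3.
split; first by move=> t; case: (Hl t).
move=> d d0; have dE0 : 0 < d * (xi0 ^+ 2 + eta0 ^+ 2) by rewrite mulr_gt0.
apply: ultimately_gtP.
apply: ultimatelyW (ultimatelyI (ultimatelyI (ultimatelyI (slow_eig_oblique Hl d0)
  (viscous_eig_oblique Hl dE0)) (transport_eig_oblique Hl d0)) (ultimately_ge 1)) => t [[[W1 W2] W3] t1].
move=> xi eps2; rewrite /id expr0 mulr1 in W1 W2 W3.
have eps2E : eps2 = t ^+ 2 * (xi0 ^+ 2 + eta0 ^+ 2) by rewrite /eps2 /xi; ring.
rewrite !normc_le; split; last split.
- rewrite normcBC; congr (normc (_ - _) <= _): W1.
  have t0 : t != 0 by rewrite gt_eqF // (lt_le_trans ltr01).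
  apply: (mulfI (mulf_neq0 P_neq0 E0_neq0)); rewrite [LHS]mulrC divfK ?mulf_neq0 //.
  have -> : T * B * y ^+ 2 + P * U * E0 = (tan theta * (alpha * a * n * h * c / (rho * tan theta))
      * - xi0 ^+ 2 + alpha * h * (a * m * c / rho) * (xi0 ^+ 2 + eta0 ^+ 2))%:C.
    by rewrite exprMn sqr_i !(rmorphD, rmorphM, rmorphN, rmorphXn); ring.
  rewrite -!rmorphM eps2E /xi /acoef; congr _%:C; field.
  by rewrite t0 !lt0r_neq0.
- move: W2; congr (normc _ <= _); last by rewrite eps2E; ring.
  by rewrite eps2E !(rmorphM, rmorphN, rmorphXn, rmorphD); ring.
- rewrite normcBC; congr (normc (_ - _) <= _): W3.
  by rewrite !rmorphM; ring.
Qed.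

End ObliqueFrequency.

Section PositiveDiffusion.
Hypothesis K_gt0 : 0 < K.

Local Notation rad q := (Num.sqrt (q.1 ^+ 2 + q.2 ^+ 2)).
Local Notation rh := (fun q : R * R => rad q).
Local Notation c2 q := (C2 q.1 q.2).
Local Notation c1 q := (C1 q.1 q.2).
Local Notation c0 q := (C0 q.1 q.2).
Local Notation z0 q := (- (A + T * X q.1)).
Local Notation KE q := (K%:C * E q.1 q.2).

Let newton (q : R * R) (z l : R[i]) : bool :=
  normc (z - l) * normc (dcubic (c2 q) (c1 q) z) <= 3%:R * normc (cubic (c2 q) (c1 q) (c0 q) z).

Let eigs_Kpos : exists l1 l2 l3 : R * R -> R[i], forall q,
  [/\ eigs3 (symbol q.1 q.2) (l1 q) (l2 q) (l3 q), newton q (z0 q) (l3 q)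
    & normc (l1 q + KE q) <= normc (l2 q + KE q)].
Proof.
have [k1 [k2 [l3 Hk]]] := eigs3_choose (M := fun q : R * R => symbol q.1 q.2)
  (Q3 := fun q => newton q (z0 q)) (Q1 := fun _ _ => True)
  (fun q _ _ _ He => eigs3_newton (z0 q) (char_poly_Asym q.1 q.2) He)
  (fun _ _ _ _ _ => Or31 _ _ I).
pose small q := normc (k1 q + KE q) <= normc (k2 q + KE q).
exists (fun q => if small q then k1 q else k2 q), (fun q => if small q then k2 q else k1 q), l3.
move=> q; case: (Hk q) => He H3 _; rewrite /small.
case: ifP => [//|/negbT]; rewrite -ltNge => lt21; split => //; last exact: ltW.
by move: He; rewrite /eigs3 => ->; ring.
Qed.

Let rad_sqr (q : R * R) : rad q ^+ 2 = q.1 ^+ 2 + q.2 ^+ 2.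
Proof. by rewrite sqr_sqrtr // addr_ge0 ?sqr_ge0. Qed.

Let normc_E (q : R * R) : normc (E q.1 q.2) = rad q ^+ 2.
Proof. by rewrite rad_sqr normcC // addr_ge0 ?sqr_ge0. Qed.

Let dominated_E : dominated rh 2 (fun q => E q.1 q.2).
Proof. by exists 1; split => //; apply: ultimatelyW (ultimately_ge 1) => q _; rewrite mul1r normc_E. Qed.

Let dominated_X : dominated rh 1 (fun q => X q.1).
Proof.
exists 1; split => //; apply: ultimatelyW (ultimately_ge 1) => q _.
rewrite mul1r expr1 normcM normc_i mul1r normc_real -sqrtr_sqr.
by rewrite ler_sqrt ?addr_ge0 ?sqr_ge0 // lerDl sqr_ge0.
Qed.

Let dominated_monomial (i j k : nat) (w : R[i]) : (i + 2 * j <= k)%N ->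
  dominated rh k (fun q => w * X q.1 ^+ i * E q.1 q.2 ^+ j).
Proof.
move=> ijk; apply: (dominatedW ijk).
have := dominatedM (dominatedM (dominated_cst w) (dominatedX i dominated_X)) (dominatedX j dominated_E).
by rewrite add0n mul1n.
Qed.

Let KE_real (q : R * R) : KE q = (K * rad q ^+ 2)%:C.
Proof. by rewrite rad_sqr [RHS]rmorphM. Qed.

Let PE_real (q : R * R) : P * E q.1 q.2 = (alpha * h * rad q ^+ 2)%:C.
Proof. by rewrite rad_sqr [RHS]rmorphM. Qed.

Section PositiveDiffusionEigenvalues.
Variables l1 l2 l3 : R * R -> R[i].
Hypothesis Hl : forall q,
  [/\ eigs3 (symbol q.1 q.2) (l1 q) (l2 q) (l3 q), newton q (z0 q) (l3 q)
    & normc (l1 q + KE q) <= normc (l2 q + KE q)].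

Let vieta q : [/\ l1 q + l2 q + l3 q = - c2 q, l1 q * l2 q + l1 q * l3 q + l2 q * l3 q = c1 q
  & l1 q * l2 q * l3 q = - c0 q].
Proof. by case: (Hl q) => /(eigs3_vieta (char_poly_Asym q.1 q.2)). Qed.

Lemma transport_eig_Kpos : negligible rh 0 (fun q => z0 q - l3 q).
Proof.
have cK : 0 < K * (alpha * h) by rewrite !mulr_gt0.
pose rest q := A ^+ 2 + (A * T + 2%:R * A * B) * X q.1 - (P * A + A * K%:C + P * U) * E q.1 q.2
  - P * T * X q.1 * E q.1 q.2.
have Ed q : dcubic (c2 q) (c1 q) (z0 q) = K%:C * P * E q.1 q.2 ^+ 2 + rest q.
  by rewrite dcubic_transport /rest; ring.
have Hd : ultimately rh (fun q => K * (alpha * h) * rad q ^+ 4 <= normc (K%:C * P * E q.1 q.2 ^+ 2)).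
  apply: ultimatelyW (ultimately_ge 1) => q _.
  by rewrite !normcM !normc_E (normcC (ltW K_gt0)) (normcC (ltW (mulr_gt0 halpha hh))) -exprD.
have Hrest : dominated rh 3 rest.
  have := dominatedB (dominatedB (dominatedD (@dominated_monomial 0 0 3 (A ^+ 2) isT)
    (@dominated_monomial 1 0 3 (A * T + 2%:R * A * B) isT))
    (@dominated_monomial 0 1 3 (P * A + A * K%:C + P * U) isT))
    (@dominated_monomial 1 1 3 (P * T) isT).
  by apply: eq_dominated => q; rewrite /rest; ring.
apply: (negligible_div (k := 3) (q := fun q => dcubic (c2 q) (c1 q) (z0 q))
  (f := fun q => 3%:R * cubic (c2 q) (c1 q) (c0 q) (z0 q)) (divr_gt0 cK (ltr0n _ 2))).
- by apply: ultimatelyW (ultimately_ge 1) => q _; rewrite normc_natM; case: (Hl q).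
- by apply: ultimatelyW (normc_ge_dominant cK Hd (dominated_negligible Hrest)) => q; rewrite Ed.
have := dominatedM (dominated_cst 3%:R) (dominatedB
  (@dominated_monomial 0 1 3 (A * P * U) isT) (@dominated_monomial 1 0 3 (A * A * B) isT)).
by apply: eq_dominated => q; rewrite cubic_transport; ring.
Qed.

Let dominated_l3 : dominated rh 1 l3.
Proof.
have := dominatedB (dominatedD (@dominated_monomial 0 0 1 (- A) isT) (@dominated_monomial 1 0 1 (- T) isT))
  (dominatedW (isT : 0 <= 1)%N (negligible_dominated transport_eig_Kpos)).
by apply: eq_dominated => q; ring.
Qed.

Let dominated_c2 : dominated rh 2 (fun q => c2 q).
Proof.
have := dominatedD (dominatedD (@dominated_monomial 0 1 2 (P + K%:C) isT)
  (@dominated_monomial 0 0 2 A isT)) (@dominated_monomial 1 0 2 (2%:R * T - B) isT).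
by apply: eq_dominated => q; rewrite /chi2; ring.
Qed.

(* By Vieta, [(l1 + K E) (l2 + K E)] is [O(rho^3)] although [E] is of order [rho^2]. *)
Lemma diffusive_eig_Kpos : negligible rh 2 (fun q => l1 q + KE q).
Proof.
have Hprod : dominated rh 3 (fun q => (l1 q + KE q) * (l2 q + KE q)).
  have := dominatedD (dominatedD (dominatedD (dominatedD (dominatedD
    (@dominated_monomial 1 0 3 (T * A) isT) (@dominated_monomial 2 0 3 (T ^+ 2 - 2%:R * T * B) isT))
    (@dominated_monomial 0 1 3 (P * A - P * U) isT)) (@dominated_monomial 1 1 3 (P * T + K%:C * B) isT))
    (dominatedM (@dominated_monomial 0 1 2 (- K%:C) isT) dominated_l3))
    (dominatedM dominated_l3 (dominatedD dominated_c2 (dominatedW (isT : 1 <= 2)%N dominated_l3))).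
  apply: eq_dominated => q; case: (vieta q) => S1 S2 _.
  have Es : l1 q + l2 q = - c2 q - l3 q by rewrite -S1; ring.
  have Ep : l1 q * l2 q = c1 q - l3 q * (l1 q + l2 q) by rewrite -S2; ring.
  rewrite (_ : (l1 q + KE q) * (l2 q + KE q) = l1 q * l2 q + KE q * (l1 q + l2 q) + KE q ^+ 2);
    last by ring.
  by rewrite Ep Es /chi1 /chi2; ring.
apply: (negligible_sqrt (k := 2) _ (dominated_negligible Hprod)).
apply: ultimatelyW (ultimately_ge 1) => q _; rewrite normcM expr2.
case: (Hl q) => _ _ H; have := normc_ge0 (l1 q + KE q); nra.
Qed.

Lemma viscous_eig_Kpos : negligible rh 2 (fun q => l2 q + P * E q.1 q.2).
Proof.
have := negligibleB (negligibleN diffusive_eig_Kpos) (dominated_negligible (dominatedD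
  (dominatedD (@dominated_monomial 0 0 1 A isT) (@dominated_monomial 1 0 1 (2%:R * T - B) isT))
  dominated_l3)).
apply: eq_negligible => q; case: (vieta q) => S1 _ _.
by rewrite (_ : l2 q = - c2 q - l1 q - l3 q) /chi2; [ring | rewrite -S1; ring].
Qed.

Lemma eigs_Kpos_bounds d : 0 < d -> exists M : R, forall xi eta : R,
  M < xi ^+ 2 + eta ^+ 2 ->
  `| l1 (xi, eta) - (- K * (xi ^+ 2 + eta ^+ 2))%:C | <= (d * (xi ^+ 2 + eta ^+ 2))%:C /\
  `| l2 (xi, eta) - (- alpha * h * (xi ^+ 2 + eta ^+ 2))%:C | <= (d * (xi ^+ 2 + eta ^+ 2))%:C /\
  `| l3 (xi, eta) - (- ('i * (xi * tan theta)%:C) - a%:C) | <= d%:C.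
Proof.
move=> d0; apply: ultimately_norm2P.
apply: ultimatelyW (ultimatelyI (ultimatelyI (diffusive_eig_Kpos d0) (viscous_eig_Kpos d0))
  (transport_eig_Kpos d0)) => q [[H1 H2] H3].
rewrite -surjective_pairing !normc_le -rad_sqr; split; last split.
- suff -> : l1 q - (- K * rad q ^+ 2)%:C = l1 q + K%:C * E q.1 q.2 by [].
  by rewrite KE_real mulNr rmorphN opprK.
- suff -> : l2 q - (- alpha * h * rad q ^+ 2)%:C = l2 q + P * E q.1 q.2 by [].
  by rewrite PE_real !mulNr rmorphN opprK.
- suff -> : - ('i * (q.1 * tan theta)%:C) - A = z0 q by rewrite normcBC -(mulr1 d) -(expr0 (rad q)).
  by rewrite [in LHS]rmorphM; ring.
Qed.

Lemma eigs_Kpos_stable : exists M : R, forall xi eta : R,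
  M < xi ^+ 2 + eta ^+ 2 -> spectrally_stable (symbol xi eta).
Proof.
apply: ultimately_norm2P.
have hK : 0 < K / 2 by rewrite divr_gt0.
have hP : 0 < alpha * h / 2 by rewrite divr_gt0 ?mulr_gt0.
have ha : 0 < a / 2 by rewrite divr_gt0.
apply: ultimatelyW (ultimatelyI (ultimatelyI (ultimatelyI (diffusive_eig_Kpos hK)
  (viscous_eig_Kpos hP)) (transport_eig_Kpos ha)) (ultimately_ge 1)) => q [[[H1 H2] H3] r1].
have r2 : 0 < rad q ^+ 2 by rewrite exprn_gt0 // (lt_le_trans ltr01 r1).
case: (Hl q) => He _ _ l /(eigs3_eigenvalue He) [] ->;
  rewrite -complexRe -(rmorph0 (real_complex R)) ltcR.
- move: H1; rewrite KE_real => H1; have := Re_le_normcB (l1 q) (- (K * rad q ^+ 2)%:C).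
  rewrite opprK -rmorphN /=; have := mulr_gt0 K_gt0 r2; lra.
- move: H2; rewrite PE_real => H2; have := Re_le_normcB (l2 q) (- (alpha * h * rad q ^+ 2)%:C).
  rewrite opprK -rmorphN /=; have := mulr_gt0 (mulr_gt0 halpha hh) r2; lra.
- have := Re_le_normcB (l3 q) (z0 q); rewrite normcBC expr0 mulr1 in H3.
  have -> : complex.Re (z0 q) = - a by rewrite /=; ring.
  lra.
Qed.

End PositiveDiffusionEigenvalues.

Lemma eigs_Kpos_asymptotics :
  (exists l1 l2 l3 : R -> R -> R[i],
    (forall xi eta, eigs3 (symbol xi eta) (l1 xi eta) (l2 xi eta) (l3 xi eta)) /\
    (forall d : R, 0 < d -> exists M : R, forall xi eta : R,
       M < xi ^+ 2 + eta ^+ 2 ->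
       `| l1 xi eta - (- K * (xi ^+ 2 + eta ^+ 2))%:C | <= (d * (xi ^+ 2 + eta ^+ 2))%:C /\
       `| l2 xi eta - (- alpha * h * (xi ^+ 2 + eta ^+ 2))%:C |
          <= (d * (xi ^+ 2 + eta ^+ 2))%:C /\
       `| l3 xi eta - (- ('i * (xi * tan theta)%:C) - a%:C) | <= d%:C)) /\
  (exists M : R, forall xi eta : R,
     M < xi ^+ 2 + eta ^+ 2 -> spectrally_stable (symbol xi eta)).
Proof.
have [l1 [l2 [l3 Hl]]] := eigs_Kpos; split; last exact: eigs_Kpos_stable Hl.
exists (fun xi eta => l1 (xi, eta)), (fun xi eta => l2 (xi, eta)), (fun xi eta => l3 (xi, eta)).
by split; [move=> xi eta; case: (Hl (xi, eta)) | exact: eigs_Kpos_bounds Hl].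
Qed.

End PositiveDiffusion.

End ErosionSymbol.

Theorem proposition4p3 (R : realType) (theta alpha K m n e s rho h : R) :
  0 < theta < pi / 2 -> 0 < alpha -> 0 <= K -> 0 < m -> 0 < n ->
  0 < e -> 0 < s -> 0 < rho -> 0 < h ->
  let A := Asym theta alpha K m n e s rho h in
  let c := cbar theta m n e s h in
  let a := acoef e s rho h in
  (0 < K ->
    (exists l1 l2 l3 : R -> R -> R[i],
      (forall xi eta, eigs3 (A xi eta) (l1 xi eta) (l2 xi eta) (l3 xi eta)) /\
      (forall d : R, 0 < d -> exists M : R, forall xi eta : R,
         M < xi ^+ 2 + eta ^+ 2 ->
         `| l1 xi eta - (- K * (xi ^+ 2 + eta ^+ 2))%:C |
            <= (d * (xi ^+ 2 + eta ^+ 2))%:C /\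
         `| l2 xi eta - (- alpha * h * (xi ^+ 2 + eta ^+ 2))%:C |
            <= (d * (xi ^+ 2 + eta ^+ 2))%:C /\
         `| l3 xi eta - (- ('i * (xi * tan theta)%:C) - a%:C) | <= d%:C)) /\
    (exists M : R, forall xi eta : R,
       M < xi ^+ 2 + eta ^+ 2 -> spectrally_stable (A xi eta))) /\
  (K = 0 -> forall xi0 eta0 : R, xi0 != 0 ->
    exists l1 l2 l3 : R -> R[i],
      (forall t, eigs3 (A (t * xi0) (t * eta0)) (l1 t) (l2 t) (l3 t)) /\
      (forall d : R, 0 < d -> exists M : R, forall t : R, M < t ->
         let xi := t * xi0 in
         let eps2 := xi ^+ 2 + (t * eta0) ^+ 2 in
         `| l1 t - (s * c / (e * h) * (m - xi ^+ 2 / eps2 * n))%:C | <= d%:C /\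
         `| l2 t - (- alpha * h * eps2)%:C | <= (d * eps2)%:C /\
         `| l3 t - (- ('i * (xi * tan theta)%:C) - a%:C) | <= d%:C)) /\
  (K = 0 ->
    exists l1 l2 l3 : R -> R[i],
      (forall eta, eigs3 (A 0 eta) (l1 eta) (l2 eta) (l3 eta)) /\
      (forall eta, l1 eta = 0) /\
      (forall d : R, 0 < d -> exists M : R, forall eta : R, M < eta ->
         `| l2 eta - (- alpha * h * eta ^+ 2)%:C | <= (d * eta ^+ 2)%:C /\
         `| l3 eta - (s * c / (e * h) * (m - rho / c))%:C | <= d%:C)).
Proof.
move=> ht ha _ _ _ he hs hr hh A c a; split; [|split].
- by move=> K_gt0; exact: eigs_Kpos_asymptotics.
- by move=> K0; exact: eigs_oblique_asymptotics.
- by move=> K0; exact: eigs_normal_asymptotics.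
Qed.
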